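(* Assume the setting in the context. (a) Assume Conditions (MM), (SS), (JS-cts) and (JS-jump). Suppose that for every $f\in\mathcal{D}_{\mathcal{X}}$ there is at most one $u_+\in\mathcal{X}^{\mathcal{U}}$ with $(\widehat Lu_+)|_{\mathcal{U}}=0$, $\widetilde{\operatorname{Tr}}^{\mathcal{U}}_{\mathcal{X}}u_+=f$, and at most one $u_-\in\mathcal{X}^{\mathcal{V}}$ with $(\widehat Lu_-)|_{\mathcal{V}}=0$, $\widetilde{\operatorname{Tr}}^{\mathcal{V}}_{\mathcal{X}}u_-=f$. Then $\widetilde{\operatorname{Tr}}^{\mathcal{U}}_{\mathcal{X}}\widehat{\mathbf{S}}^L_{\mathcal{U}}:\mathcal{N}_{\mathcal{X}}\to\mathcal{D}_{\mathcal{X}}$ is one-to-one. If in addition there is $C_0$ such that every $u_+\in\mathcal{X}^{\mathcal{U}}$ with $(\widehat Lu_+)|_{\mathcal{U}}=0$ and every $u_-\in\mathcal{X}^{\mathcal{V}}$ with $(\widehat Lu_-)|_{\mathcal{V}}=0$ satisfy $\|u_+\|_{\mathcal{X}^{\mathcal{U}}}\le C_0\|\widetilde{\operatorname{Tr}}^{\mathcal{U}}_{\mathcal{X}}u_+\|_{\mathcal{D}_{\mathcal{X}}}$ and $\|u_-\|_{\mathcal{X}^{\mathcal{V}}}\le C_0\|\widetilde{\operatorname{Tr}}^{\mathcal{V}}_{\mathcal{X}}u_-\|_{\mathcal{D}_{\mathcal{X}}}$, then there is $C_1$ with $\|g\|_{\mathcal{N}_{\mathcal{X}}}\le C_1\|\widetilde{\operatorname{Tr}}^{\mathcal{U}}_{\mathcal{X}}\widehat{\mathbf{S}}^L_{\mathcal{U}}g\|_{\mathcal{D}_{\mathcal{X}}}$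 for all $g\in\mathcal{N}_{\mathcal{X}}$. (b) Assume Conditions (TT), (DD), (JD-cts) and (JD-jump). Suppose that for every $g\in\mathcal{N}_{\mathcal{X}}$ there is at most one $u_+\in\mathcal{X}^{\mathcal{U}}$ with $(\widehat Lu_+)|_{\mathcal{U}}=0$, $\widehat{\mathbf{M}}^{\mathcal{U}}_Bu_+=g$, and at most one $u_-\in\mathcal{X}^{\mathcal{V}}$ with $(\widehat Lu_-)|_{\mathcal{V}}=0$, $\widehat{\mathbf{M}}^{\mathcal{V}}_Bu_-=g$. Then $\widehat{\mathbf{M}}^{\mathcal{U}}_B\widehat{\mathbf{D}}^B_{\mathcal{U}}:\mathcal{D}_{\mathcal{X}}\to\mathcal{N}_{\mathcal{X}}$ is one-to-one. If in addition there is $C_0$ such that every $u_+\in\mathcal{X}^{\mathcal{U}}$ with $(\widehat Lu_+)|_{\mathcal{U}}=0$ and every $u_-\in\mathcal{X}^{\mathcal{V}}$ with $(\widehat Lu_-)|_{\mathcal{V}}=0$ satisfy $\|u_+\|_{\mathcal{X}^{\mathcal{U}}}\le C_0\|\widehat{\mathbf{M}}^{\mathcal{U}}_Bu_+\|_{\mathcal{N}_{\mathcal{X}}}$ and $\|u_-\|_{\mathcal{X}^{\mathcal{V}}}\le C_0\|\widehat{\mathbf{M}}^{\mathcal{V}}_Bu_-\|_{\mathcal{N}_{\mathcal{X}}}$, then there is $C_1$ with $\|f\|_{\mathcal{D}_{\mathcal{X}}}\le C_1\|\widehat{\mathbf{M}}^{\mathcal{U}}_B\widehat{\mathbf{D}}^B_{\mathcal{U}}f\|_{\mathcal{N}_{\mathcal{X}}}$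 for all $f\in\mathcal{D}_{\mathcal{X}}$.
   Context: Let $\mathcal{X}^{\mathcal{U}}$, $\mathcal{X}^{\mathcal{V}}$, $\mathcal{D}_{\mathcal{X}}$, $\mathcal{N}_{\mathcal{X}}$ be quasi-Banach spaces. For $\mathcal{O}\in\{\mathcal{U},\mathcal{V}\}$: let $u\mapsto(\widehat Lu)|_{\mathcal{O}}$ be a linear operator on $\mathcal{X}^{\mathcal{O}}$, let $\mathcal{K}^{\mathcal{O}}=\{u\in\mathcal{X}^{\mathcal{O}}:(\widehat Lu)|_{\mathcal{O}}=0\}$, and let $\widetilde{\operatorname{Tr}}^{\mathcal{O}}_{\mathcal{X}}:\mathcal{K}^{\mathcal{O}}\to\mathcal{D}_{\mathcal{X}}$, $\widehat{\mathbf{M}}^{\mathcal{O}}_B:\mathcal{K}^{\mathcal{O}}\to\mathcal{N}_{\mathcal{X}}$, $\widehat{\mathbf{D}}^B_{\mathcal{O}}:\mathcal{D}_{\mathcal{X}}\to\mathcal{X}^{\mathcal{O}}$, $\widehat{\mathbf{S}}^L_{\mathcal{O}}:\mathcal{N}_{\mathcal{X}}\to\mathcal{X}^{\mathcal{O}}$ be linear operators. For $\mathcal{O}\in\{\mathcal U,\mathcal V\}$ consider: (T)$_{\mathcal{O}}$ $\widetilde{\operatorname{Tr}}^{\mathcal{O}}_{\mathcal{X}}$ is bounded $\mathcal{K}^{\mathcal{O}}\to\mathcal{D}_{\mathcal{X}}$; (M)$_{\mathcal{O}}$ $\widehat{\mathbf{M}}^{\mathcal{O}}_B$ is bounded $\mathcal{K}^{\mathcal{O}}\to\mathcal{N}_{\mathcal{X}}$;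 (S)$_{\mathcal{O}}$ $\widehat{\mathbf{S}}^L_{\mathcal{O}}$ is bounded $\mathcal{N}_{\mathcal{X}}\to\mathcal{X}^{\mathcal{O}}$ with range in $\mathcal{K}^{\mathcal{O}}$; (D)$_{\mathcal{O}}$ $\widehat{\mathbf{D}}^B_{\mathcal{O}}$ is bounded $\mathcal{D}_{\mathcal{X}}\to\mathcal{X}^{\mathcal{O}}$ with range in $\mathcal{K}^{\mathcal{O}}$; (G)$_{\mathcal{O}}$ every $u\in\mathcal{K}^{\mathcal{O}}$ satisfies $u=-\widehat{\mathbf{D}}^B_{\mathcal{O}}(\widetilde{\operatorname{Tr}}^{\mathcal{O}}_{\mathcal{X}}u)+\widehat{\mathbf{S}}^L_{\mathcal{O}}(\widehat{\mathbf{M}}^{\mathcal{O}}_Bu)$. Condition (TT) means (T)$_{\mathcal U}$ and (T)$_{\mathcal V}$ both hold; likewise (MM), (SS), (DD), (GG). Further conditions (each including that the potentials involved lie in the respective $\mathcal K^{\mathcal O}$, so the expressions are defined): (JS-cts) $\widetilde{\operatorname{Tr}}^{\mathcal{U}}_{\mathcal{X}}(\widehat{\mathbf{S}}^L_{\mathcal{U}}g)-\widetilde{\operatorname{Tr}}^{\mathcal{V}}_{\mathcal{X}}(\widehat{\mathbf{S}}^L_{\mathcal{V}}g)=0$ for all $g\in\mathcal{N}_{\mathcal{X}}$; (JD-cts) $\widehat{\mathbf{M}}^{\mathcal{U}}_B(\widehat{\mathbf{D}}^B_{\mathcal{U}}f)-\widehat{\mathbf{M}}^{\mathcal{V}}_B(\widehat{\mathbf{D}}^B_{\mathcal{V}}f)=0$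 for all $f\in\mathcal{D}_{\mathcal{X}}$; (JS-jump) $\widehat{\mathbf{M}}^{\mathcal{U}}_B(\widehat{\mathbf{S}}^L_{\mathcal{U}}g)+\widehat{\mathbf{M}}^{\mathcal{V}}_B(\widehat{\mathbf{S}}^L_{\mathcal{V}}g)=g$ for all $g\in\mathcal{N}_{\mathcal{X}}$; (JD-jump) $\widetilde{\operatorname{Tr}}^{\mathcal{U}}_{\mathcal{X}}(\widehat{\mathbf{D}}^B_{\mathcal{U}}f)+\widetilde{\operatorname{Tr}}^{\mathcal{V}}_{\mathcal{X}}(\widehat{\mathbf{D}}^B_{\mathcal{V}}f)=-f$ for all $f\in\mathcal{D}_{\mathcal{X}}$. *)

From mathcomp Require Import all_boot all_order all_algebra.
Set Implicit Arguments.
Unset Strict Implicit.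
Unset Printing Implicit Defensive.
Import Order.TTheory GRing.Theory Num.Theory.
Local Open Scope ring_scope.

(* Scalars: an arbitrary numeric field R (covers the real and the complex case);
   a quasi-norm on an R-module V is a map q : V -> R with values >= 0. *)

Definition quasi_norm (R : numFieldType) (V : lmodType R) (q : V -> R) : Prop :=
  [/\ forall x, 0 <= q x,
      forall x, q x = 0 -> x = 0,
      forall (a : R) x, q (a *: x) = `|a| * q x
    & exists kappa : R, 1 <= kappa /\ forall x y, q (x + y) <= kappa * (q x + q y)].

Definition qcomplete (R : numFieldType) (V : lmodType R) (q : V -> R) : Prop :=
  forall u : nat -> V,
    (forall eps : R, 0 < eps -> exists N, forall m n, (N <= m)%N -> (N <= n)%N ->
        q (u m - u n) < eps) ->
    exists l : V, forall eps : R, 0 < eps -> exists N, forall n, (N <= n)%N ->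
        q (u n - l) < eps.

Definition quasi_banach (R : numFieldType) (V : lmodType R) (q : V -> R) : Prop :=
  quasi_norm q /\ qcomplete q.

(* T is linear on the subset P (used for operators defined on the kernel K^O) *)
Definition linear_on (R : numFieldType) (V W : lmodType R) (P : V -> Prop)
  (T : V -> W) : Prop :=
  forall (a : R) x y, P x -> P y -> T (a *: x + y) = a *: T x + T y.

Definition bounded_on (R : numFieldType) (V W : lmodType R) (P : V -> Prop)
  (qV : V -> R) (qW : W -> R) (T : V -> W) : Prop :=
  exists C : R, forall x, P x -> qW (T x) <= C * qV x.

From mathcomp Require Import all_boot all_order all_algebra.
Import Order.TTheory GRing.Theory Num.Theory.
Local Open Scope ring_scope.

Set Implicit Arguments.
Unset Strict Implicit.

(* Both parts are one argument.  A layer potential g |-> (pot_U g, pot_V g)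
   has the same boundary datum f on both sides, so by uniqueness it is
   determined by f; the jump relation then recovers g from this pair, which
   gives injectivity.  Under the stability estimates, the quasi-triangle
   inequality applied to the jump relation bounds the quasi-norm of g by that
   of f.  Part (a) takes traces as data and conormal derivatives as jumps
   (jump sign 1), part (b) the other way round (jump sign -1). *)

Section QuasiNormFacts.
Variables (R : numFieldType) (V : lmodType R) (q : V -> R).
Hypothesis hq : quasi_norm q.

Lemma quasi_norm_ge0 x : 0 <= q x.
Proof. by case: hq. Qed.

Lemma quasi_normZ (a : R) x : q (a *: x) = `|a| * q x.
Proof. by case: hq. Qed.

Lemma quasi_norm_triangle :
  exists2 k : R, 0 <= k & forall x y, q (x + y) <= k * (q x + q y).
Proof.
case: hq => _ _ _ [k [k_ge1 hk]]; exists k => //.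
exact: le_trans k_ge1.
Qed.

End QuasiNormFacts.

Lemma bounded_on_ge0 (R : numFieldType) (V W : lmodType R) (P : V -> Prop)
    (qV : V -> R) (qW : W -> R) (T : V -> W) :
  (forall x, 0 <= qV x) -> (forall y, 0 <= qW y) -> bounded_on P qV qW T ->
  exists2 C : R, 0 <= C & forall x, P x -> qW (T x) <= C * qV x.
Proof.
move=> qV_ge0 qW_ge0 [C hC]; exists `|C| => // x Px.
have CqV_ge0 : 0 <= C * qV x by apply: le_trans (hC x Px).
by rewrite -(ger0_norm (qV_ge0 x)) -normrM ger0_norm // hC.
Qed.

Section LayerPotentialInversion.
Variables (R : numFieldType) (XU XV A B : lmodType R).
Variables (KU : XU -> Prop) (KV : XV -> Prop).
Variables (dataU : XU -> A) (dataV : XV -> A) (jumpU : XU -> B) (jumpV : XV -> B).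
Variables (potU : B -> XU) (potV : B -> XV) (e : R).
Hypotheses (potU_K : forall g, KU (potU g)) (potV_K : forall g, KV (potV g)).
Hypothesis data_cts : forall g, dataU (potU g) - dataV (potV g) = 0.
Hypothesis jump_rel : forall g, jumpU (potU g) + jumpV (potV g) = e *: g.
Hypothesis norm_e : `|e| = 1.

Lemma layer_dataV g : dataV (potV g) = dataU (potU g).
Proof. by apply/esym/subr0_eq. Qed.

Lemma layer_data_injective :
  (forall f u1 u2, KU u1 -> KU u2 -> dataU u1 = f -> dataU u2 = f -> u1 = u2) ->
  (forall f u1 u2, KV u1 -> KV u2 -> dataV u1 = f -> dataV u2 = f -> u1 = u2) ->
  injective (fun g => dataU (potU g)).
Proof.
move=> uniqU uniqV g1 g2 /= eq_data.
have eqU : potU g1 = potU g2 by apply: (uniqU (dataU (potU g2))).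
have eqV : potV g1 = potV g2.
  by apply: (uniqV (dataU (potU g2))); rewrite ?layer_dataV.
have e_neq0 : e != 0 by rewrite -normr_eq0 norm_e oner_neq0.
by apply: (can_inj (scalerK e_neq0)); rewrite -!jump_rel eqU eqV.
Qed.

Lemma layer_data_lower_bound (qXU : XU -> R) (qXV : XV -> R) (qA : A -> R)
    (qB : B -> R) (C0 : R) :
  (forall u, 0 <= qXU u) -> (forall u, 0 <= qXV u) -> quasi_norm qB ->
  bounded_on KU qXU qB jumpU -> bounded_on KV qXV qB jumpV ->
  (forall u, KU u -> qXU u <= C0 * qA (dataU u)) ->
  (forall u, KV u -> qXV u <= C0 * qA (dataV u)) ->
  exists C1 : R, forall g, qB g <= C1 * qA (dataU (potU g)).
Proof.
move=> qXU_ge0 qXV_ge0 hqB bjU bjV stabU stabV.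
have [CU CU_ge0 hjU] := bounded_on_ge0 qXU_ge0 (quasi_norm_ge0 hqB) bjU.
have [CV CV_ge0 hjV] := bounded_on_ge0 qXV_ge0 (quasi_norm_ge0 hqB) bjV.
have [k k_ge0 hk] := quasi_norm_triangle hqB.
exists (k * (CU * C0 + CV * C0)) => g.
have -> : qB g = qB (jumpU (potU g) + jumpV (potV g)).
  by rewrite jump_rel quasi_normZ // norm_e mul1r.
apply: le_trans (hk _ _) _; rewrite -mulrA ler_wpM2l // mulrDl.
apply: lerD; rewrite -mulrA.
- apply: le_trans (hjU _ (potU_K g)) _.
  by rewrite ler_wpM2l // stabU.
- apply: le_trans (hjV _ (potV_K g)) _.
  by rewrite ler_wpM2l // -layer_dataV stabV.
Qed.

End LayerPotentialInversion.

Theorem theorem6p3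
  (R : numFieldType)
  (XU XV D N WU WV : lmodType R)
  (qXU : XU -> R) (qXV : XV -> R) (qD : D -> R) (qN : N -> R)
  (hXU : quasi_banach qXU) (hXV : quasi_banach qXV)
  (hD : quasi_banach qD) (hN : quasi_banach qN)
  (* u |-> (L u)|_U and u |-> (L u)|_V, linear; K^O is their kernel *)
  (LU : {linear XU -> WU}) (LV : {linear XV -> WV})
  (* traces and conormal derivatives, linear on K^O *)
  (TrU : XU -> D) (TrV : XV -> D) (MU : XU -> N) (MV : XV -> N)
  (hTrU : linear_on (fun u => LU u = 0) TrU)
  (hTrV : linear_on (fun u => LV u = 0) TrV)
  (hMU : linear_on (fun u => LU u = 0) MU)
  (hMV : linear_on (fun u => LV u = 0) MV)
  (* double and single layer potentials *)
  (DU : {linear D -> XU}) (DV : {linear D -> XV})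
  (SU : {linear N -> XU}) (SV : {linear N -> XV}) :
  (* part (a) *)
  ((* (MM) *)
   bounded_on (fun u => LU u = 0) qXU qN MU ->
   bounded_on (fun u => LV u = 0) qXV qN MV ->
   (* (SS) *)
   bounded_on (fun _ => True) qN qXU SU -> (forall g, LU (SU g) = 0) ->
   bounded_on (fun _ => True) qN qXV SV -> (forall g, LV (SV g) = 0) ->
   (* (JS-cts) *)
   (forall g, TrU (SU g) - TrV (SV g) = 0) ->
   (* (JS-jump) *)
   (forall g, MU (SU g) + MV (SV g) = g) ->
   (* uniqueness for the Dirichlet problems *)
   (forall f u1 u2, LU u1 = 0 -> LU u2 = 0 -> TrU u1 = f -> TrU u2 = f -> u1 = u2) ->
   (forall f u1 u2, LV u1 = 0 -> LV u2 = 0 -> TrV u1 = f -> TrV u2 = f -> u1 = u2) ->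
   injective (fun g => TrU (SU g)) /\
   ((exists C0 : R,
       (forall u, LU u = 0 -> qXU u <= C0 * qD (TrU u)) /\
       (forall u, LV u = 0 -> qXV u <= C0 * qD (TrV u))) ->
    exists C1 : R, forall g, qN g <= C1 * qD (TrU (SU g))))
  /\
  (* part (b) *)
  ((* (TT) *)
   bounded_on (fun u => LU u = 0) qXU qD TrU ->
   bounded_on (fun u => LV u = 0) qXV qD TrV ->
   (* (DD) *)
   bounded_on (fun _ => True) qD qXU DU -> (forall f, LU (DU f) = 0) ->
   bounded_on (fun _ => True) qD qXV DV -> (forall f, LV (DV f) = 0) ->
   (* (JD-cts) *)
   (forall f, MU (DU f) - MV (DV f) = 0) ->
   (* (JD-jump) *)
   (forall f, TrU (DU f) + TrV (DV f) = - f) ->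
   (* uniqueness for the Neumann problems *)
   (forall g u1 u2, LU u1 = 0 -> LU u2 = 0 -> MU u1 = g -> MU u2 = g -> u1 = u2) ->
   (forall g u1 u2, LV u1 = 0 -> LV u2 = 0 -> MV u1 = g -> MV u2 = g -> u1 = u2) ->
   injective (fun f => MU (DU f)) /\
   ((exists C0 : R,
       (forall u, LU u = 0 -> qXU u <= C0 * qN (MU u)) /\
       (forall u, LV u = 0 -> qXV u <= C0 * qN (MV u))) ->
    exists C1 : R, forall f, qD f <= C1 * qN (MU (DU f)))).
Proof.
have qXU_ge0 := quasi_norm_ge0 hXU.1; have qXV_ge0 := quasi_norm_ge0 hXV.1.
pose KU u := LU u = 0; pose KV u := LV u = 0.
split=> [bMU bMV _ LSU _ LSV cts jump uniqU uniqV | bTU bTV _ LDU _ LDV cts jump uniqU uniqV].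
- have jump1 g : MU (SU g) + MV (SV g) = 1 *: g by rewrite scale1r.
  split; first exact: (layer_data_injective (KU := KU) (KV := KV) LSU LSV cts jump1 (normr1 R)).
  case=> C0 [stabU stabV].
  exact: (layer_data_lower_bound (KU := KU) (KV := KV) LSU LSV cts jump1 (normr1 R)
            qXU_ge0 qXV_ge0 hN.1 bMU bMV stabU stabV).
- have jumpN1 f : TrU (DU f) + TrV (DV f) = -1 *: f by rewrite jump scaleN1r.
  split; first exact: (layer_data_injective (KU := KU) (KV := KV) LDU LDV cts jumpN1 (normrN1 R)).
  case=> C0 [stabU stabV].
  exact: (layer_data_lower_bound (KU := KU) (KV := KV) LDU LDV cts jumpN1 (normrN1 R)
            qXU_ge0 qXV_ge0 hD.1 bTU bTV stabU stabV).
Qed.
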